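(* Let $X$ be a real random variable with cumulative distribution function $F$ and assume there exists $\epsilon>0$ with $\mathbb{E}[e^{-\epsilon X}]<\infty$. Let $p(-k)=\int_{-\infty}^{-k}(e^{-k}-e^x)\,dF(x)$. If $k\mapsto-\log F(-k)$ is regularly varying (at $+\infty$), then $k\mapsto-\log p(-k)$ is regularly varying and, as $k\to\infty$, $$-\log p(-k)\sim k-\log F(-k).$$
   Context: A measurable function $g$, positive for large $x$, is regularly varying (at $+\infty$) if there is $\alpha\in\mathbb{R}$ with $\lim_{x\to\infty}g(\lambda x)/g(x)=\lambda^\alpha$ for every $\lambda>0$. $g\sim h$ means $g(k)/h(k)\to1$ as $k\to\infty$. *)

From HB Require Import structures.
From mathcomp Require Import all_boot all_order all_algebra.
From mathcomp Require Import all_classical all_reals all_analysis.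
Set Implicit Arguments. Unset Strict Implicit. Unset Printing Implicit Defensive.
Import Order.TTheory GRing.Theory Num.Theory.
Import numFieldNormedType.Exports.
Local Open Scope classical_set_scope.
Local Open Scope ring_scope.

Definition regularly_varying (R : realType) (g : R -> R) : Prop :=
  measurable_fun setT g /\
  (\forall x \near +oo, 0 < g x) /\
  exists alpha : R, forall lambda : R, 0 < lambda ->
    (fun x => g (lambda * x) / g x) @ +oo --> lambda `^ alpha.

Definition asym_equiv (R : realType) (g h : R -> R) : Prop :=
  (fun k => g k / h k) @ +oo --> (1 : R).

Definition cdfR d (T : measurableType d) (R : realType) (P : probability T R)
  (X : {RV P >-> R}) (x : R) : R := fine (cdf X x).

Definition pfun d (T : measurableType d) (R : realType) (P : probability T R)
  (X : {RV P >-> R}) (k : R) : R :=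
  fine (\int[distribution P X]_(x in `]-oo, (- k)%R]) (expR (- k) - expR x)%:E)%E.

From HB Require Import structures.
From mathcomp Require Import all_boot all_order all_algebra.
From mathcomp Require Import all_classical all_reals all_analysis.
From mathcomp Require Import ring lra measurable_realfun.
Set Implicit Arguments. Unset Strict Implicit. Unset Printing Implicit Defensive.
Import Order.TTheory GRing.Theory Num.Theory.
Import numFieldNormedType.Exports.
Local Open Scope classical_set_scope.
Local Open Scope ring_scope.

(* Write F for the cdf of X and g k := - ln F (- k), a nondecreasing function.
   Restricting the integral defining p (- k) to x <= - (k + 1) gives
     e^(-k) (1 - e^(-1)) F (- (k + 1)) <= p (- k) <= e^(-k) F (- k),
   so q k := - ln p (- k) lies between k + g k and k + c + g (k + 1).  For a
   monotone regularly varying g, g (k + 1) / g k -> 1, whence q ~ k + g k, and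
   asymptotic equivalence preserves regular variation.  Finally k + g k is
   regularly varying of index max(alpha, 1): if alpha < 1 (resp. alpha > 1),
   g k / k (resp. k / g k) has doubling ratio tending to 2^(alpha - 1) < 1
   (resp. 2^(1 - alpha) < 1), which together with monotonicity forces it to
   tend to 0; if alpha = 1 both summands have index 1. *)

Section RealAsymptotics.
Variable R : realType.
Implicit Types (v : R -> R) (lam : R).

Lemma cvgr_pinfty_scale lam : 0 < lam -> lam * x @[x --> +oo] --> +oo.
Proof.
move=> lam0; apply/cvgryPgt => A; near=> x.
by rewrite -ltr_pdivrMl //; near: x; apply: nbhs_pinfty_gt; exact: num_real.
Unshelve. all: by end_near. Qed.

Lemma cvg_pinfty_scale v (l : R) lam : 0 < lam ->
  v @ +oo --> l -> v (lam * x) @[x --> +oo] --> l.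
Proof. by move=> lam0; apply: cvg_comp (cvgr_pinfty_scale lam0). Qed.

Section DyadicDecay.
Variables (v : R -> R) (K B rho : R).
Hypotheses (K_gt0 : 0 < K) (rho_ge0 : 0 <= rho) (rho_lt1 : rho < 1).
Hypothesis v_ge0 : forall x, K <= x -> 0 <= v x.
Hypothesis v_le_B : forall x, K <= x <= 2 * K -> v x <= B.
Hypothesis v_double : forall x, K <= x -> v (2 * x) <= rho * v x.

Let v_half x : 2 * K <= x -> v x <= rho * v (x / 2).
Proof.
move=> x2K; rewrite {1}(_ : x = 2 * (x / 2)); last by rewrite mulrC divfK.
by apply: v_double; rewrite ler_pdivlMr //; have := K_gt0; lra.
Qed.

Let dyadic_bound_le n x : K <= x <= 2 ^+ n * K -> v x <= B.
Proof.
elim: n x => [|n IH] x /andP[Kx xle].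
  by apply: v_le_B; rewrite Kx /=; rewrite expr0 mul1r in xle; have := K_gt0; lra.
have [x2K|x2K] := leP x (2 * K); first by apply: v_le_B; rewrite Kx.
have Kx2 : K <= x / 2 by rewrite ler_pdivlMr //; have := K_gt0; lra.
apply: le_trans (v_half (ltW x2K)) _; apply: le_trans (IH (x / 2) _).
  by apply: ler_piMl; [exact: v_ge0 | exact: ltW].
by rewrite Kx2 ler_pdivrMr // mulrAC -exprSr.
Qed.

Let dyadic_bound x : K <= x -> v x <= B.
Proof.
move=> Kx; apply: (@dyadic_bound_le (Num.truncn (x / K)).+1); rewrite Kx /=.
rewrite -ler_pdivrMr // (le_trans (ltW (truncnS_gt _))) //.
by rewrite -natrX ler_nat ltnW // ltn_expl.
Qed.

Let K_le_dyadic n : K <= 2 ^+ n * K.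
Proof. by apply: ler_peMl; [exact: ltW | apply: exprn_ege1; rewrite ler1n]. Qed.

Let dyadic_decay n x : 2 ^+ n * K <= x -> v x <= rho ^+ n * B.
Proof.
elim: n x => [|n IH] x xle.
  by rewrite expr0 mul1r; apply: dyadic_bound; rewrite expr0 mul1r in xle.
rewrite exprS -mulrA in xle.
apply: le_trans (v_half _) _; first by apply: le_trans xle; rewrite ler_pM2l.
by rewrite exprS -mulrA ler_wpM2l // IH // ler_pdivlMr // mulrC.
Qed.

Lemma dyadic_cvg0 : v @ +oo --> 0.
Proof.
apply/cvgrPdist_lt => e e0.
have rhoB0 : (fun n => rho ^+ n * B) @ \oo --> 0.
  rewrite -(mul0r B); apply: cvgM; last exact: cvg_cst.
  by apply: cvg_expr; rewrite ger0_norm.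
have [N _ rhoN] := cvgr_lt _ rhoB0 _ e0.
near=> x; have xN : 2 ^+ N * K <= x by near: x; apply: nbhs_pinfty_ge; exact: num_real.
rewrite sub0r normrN ger0_norm; last by rewrite v_ge0 // (le_trans (K_le_dyadic N)).
exact: le_lt_trans (dyadic_decay xN) (rhoN N (leqnn N)).
Unshelve. all: by end_near. Qed.

End DyadicDecay.

Lemma cvg0_doubling_ratio_lt1 v (c : R) : c < 1 ->
  (\forall x \near +oo, 0 < v x) ->
  v (2 * x) / v x @[x --> +oo] --> c ->
  (\forall K \near +oo, exists B, forall x, K <= x <= 2 * K -> v x <= B) ->
  v @ +oo --> 0.
Proof.
move=> c_lt1 v_gt0 vc v_loc.
pose rho := Num.max ((1 + c) / 2) 0.
have rho_ge0 : 0 <= rho by rewrite le_max lexx orbT.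
have rho_lt1 : rho < 1 by rewrite gt_max ltr01 andbT; lra.
have [M [_ vM]] : \forall x \near +oo, 0 < v x /\ v (2 * x) <= rho * v x.
  near=> x; have vx : 0 < v x by near: x.
  split => //; rewrite -ler_pdivrMr // le_max; apply/orP; left; apply: ltW.
  by near: x; apply: (cvgr_lt _ vc); lra.
have [M' [_ vM']] := v_loc.
pose K := Num.max (Num.max M M') 0 + 1.
have K_gt0 : 0 < K by rewrite ltr_pwDr // le_max lexx orbT.
have MK : M < K by rewrite ltr_pwDr // !le_max lexx.
have M'K : M' < K by rewrite ltr_pwDr // !le_max lexx !orbT.
have [B vB] := vM' K M'K.
apply: (dyadic_cvg0 K_gt0 rho_ge0 rho_lt1 _ vB) => x Kx.
  by rewrite ltW // (vM x (lt_le_trans MK Kx)).1.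
exact: (vM x (lt_le_trans MK Kx)).2.
Unshelve. all: by end_near. Qed.

Lemma cvg_convex_comb (s u w : R -> R) (l : R) :
  (\forall x \near +oo, 0 <= s x <= 1) -> u @ +oo --> l -> w @ +oo --> l ->
  s x * u x + (1 - s x) * w x @[x --> +oo] --> l.
Proof.
move=> s01 ul wl; apply/cvgrPdist_lt => e e0.
near=> x; have /andP[s0 s1] : 0 <= s x <= 1 by near: x.
have ue : `|l - u x| < e by near: x; exact: cvgr_dist_lt.
have we : `|l - w x| < e by near: x; exact: cvgr_dist_lt.
have -> : l - (s x * u x + (1 - s x) * w x) =
          s x * (l - u x) + (1 - s x) * (l - w x) by ring.
apply: le_lt_trans (ler_normD _ _) _.
rewrite !normrM (ger0_norm s0) [`|1 - s x|]ger0_norm ?subr_ge0 //.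
pose m := Num.max `|l - u x| `|l - w x|.
apply: (@le_lt_trans _ _ (s x * m + (1 - s x) * m)).
  by apply: lerD; apply: ler_wpM2l; rewrite ?subr_ge0 // le_max lexx ?orbT.
have -> : s x * m + (1 - s x) * m = m by ring.
by rewrite gt_max ue we.
Unshelve. all: by end_near. Qed.

Lemma ltr_powR (b : R) : 1 < b -> {homo powR b : x y / x < y}.
Proof.
move=> b1 x y xy; have b0 : b != 0 by rewrite gt_eqF // (lt_trans ltr01).
by rewrite /powR (negbTE b0) ltr_expR ltr_pM2r // ln_gt0.
Qed.

Lemma exists_gt1_powR_lt (a e : R) : 0 < e -> exists2 lam, 1 < lam & lam `^ a < 1 + e.
Proof.
move=> e0; pose b := Num.max a 1.
have b0 : 0 < b by rewrite lt_max ltr01 orbT.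
have base1 : 1 < 1 + e / 2 by rewrite ltrDl divr_gt0.
exists ((1 + e / 2) `^ b^-1).
  by rewrite -[X in X < _](powRr0 (1 + e / 2)); apply: ltr_powR; rewrite ?invr_gt0.
have lam1 : 1 <= (1 + e / 2) `^ b^-1.
  by rewrite -[X in X <= _](powRr0 (1 + e / 2)); apply: ler_powR; rewrite ?invr_ge0 ltW.
have ab : a <= b by rewrite le_max lexx.
apply: le_lt_trans (ler_powR lam1 ab) _.
rewrite -powRrM mulVf ?gt_eqF // powRr1; first lra.
by rewrite ltW // (lt_trans ltr01).
Qed.

Lemma regularly_varying_asym_equiv (q h : R -> R) : measurable_fun setT q ->
  asym_equiv q h -> regularly_varying h -> regularly_varying q.
Proof.
move=> mq qh [_ [h_gt0 [alpha h_ratio]]].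
have q_gt0 : \forall x \near +oo, 0 < q x.
  near=> x; have hx : 0 < h x by near: x.
  have qhx : 0 < q x / h x by near: x; apply: (cvgr_gt _ qh); exact: ltr01.
  by rewrite -(divfK (lt0r_neq0 hx) (q x)) mulr_gt0.
split => //; split => //; exists alpha => lam lam0.
have h_gt0' : \forall x \near +oo, 0 < h (lam * x) := cvgr_pinfty_scale lam0 h_gt0.
have q_ratio : q (lam * x) / h (lam * x) * (h (lam * x) / h x) * (q x / h x)^-1
    @[x --> +oo] --> 1 * lam `^ alpha * 1^-1.
  exact: cvgM (cvgM (cvg_pinfty_scale lam0 qh) (h_ratio lam lam0)) (cvgV (oner_neq0 _) qh).
rewrite mul1r invr1 mulr1 in q_ratio; apply: (cvg_trans _ q_ratio); apply: near_eq_cvg.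
near=> x; have hx : 0 < h x by near: x.
have hlx : 0 < h (lam * x) by near: x.
have qx : 0 < q x by near: x.
by rewrite /= invf_div; field; rewrite !gt_eqF.
Unshelve. all: by end_near. Qed.

Section NondecreasingRegularVariation.
Variables (g : R -> R) (a : R).
Hypothesis g_nd : {homo g : x y / x <= y}.
Hypothesis g_gt0 : \forall x \near +oo, 0 < g x.
Hypothesis g_ratio : forall lam, 0 < lam -> g (lam * x) / g x @[x --> +oo] --> lam `^ a.

Let eventually_pos : \forall x \near +oo, 0 < x /\ 0 < g x /\ 0 < g (2 * x).
Proof.
near=> x; have x0 : 0 < x by near: x; apply: nbhs_pinfty_gt; exact: num_real.
have gx : 0 < g x by near: x.
have x2x : x <= 2 * x by lra.
by do !split => //; exact: lt_le_trans gx (g_nd x2x).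
Unshelve. all: by end_near. Qed.

Lemma id_div_cvg0 : 1 < a -> x / g x @[x --> +oo] --> 0.
Proof.
move=> a1; apply: (@cvg0_doubling_ratio_lt1 _ (2 / 2 `^ a)).
- rewrite ltr_pdivrMr ?powR_gt0 // mul1r -[X in X < _]powRr1 ?ler0n //.
  by apply: ltr_powR; rewrite ?ltr1n.
- near=> x; have [x0 [gx _]] : 0 < x /\ 0 < g x /\ 0 < g (2 * x) by near: x.
  exact: divr_gt0.
- have two0 : (0 : R) < 2 := ltr0Sn _ 1.
  have r2 : 2 * (g (2 * x) / g x)^-1 @[x --> +oo] --> 2 * (2 `^ a)^-1.
    exact: cvgM (cvg_cst (2 : R)) (cvgV (lt0r_neq0 (powR_gt0 a two0)) (g_ratio two0)).
  apply: (cvg_trans _ r2); apply: near_eq_cvg; near=> x.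
  have [x0 [gx g2x]] : 0 < x /\ 0 < g x /\ 0 < g (2 * x) by near: x.
  by rewrite /=; field; rewrite !lt0r_neq0.
- near=> K; have [K0 [gK _]] : 0 < K /\ 0 < g K /\ 0 < g (2 * K) by near: K.
  exists (2 * K / g K) => x /andP[Kx x2K].
  have gx : 0 < g x := lt_le_trans gK (g_nd Kx).
  apply: ler_pM; [exact: ltW (lt_le_trans K0 Kx)|by rewrite invr_ge0 ltW|by []|].
  by rewrite lef_pV2 ?posrE // g_nd.
Unshelve. all: by end_near. Qed.

Lemma div_id_cvg0 : a < 1 -> g x / x @[x --> +oo] --> 0.
Proof.
move=> a1; apply: (@cvg0_doubling_ratio_lt1 _ (2 `^ a / 2)).
- rewrite ltr_pdivrMr // mul1r -[X in _ < X]powRr1 ?ler0n //.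
  by apply: ltr_powR; rewrite ?ltr1n.
- near=> x; have [x0 [gx _]] : 0 < x /\ 0 < g x /\ 0 < g (2 * x) by near: x.
  exact: divr_gt0.
- have r2 : (g (2 * x) / g x) * 2^-1 @[x --> +oo] --> 2 `^ a * 2^-1.
    exact: cvgM (g_ratio (ltr0Sn _ 1)) (cvg_cst (2 : R)^-1).
  apply: (cvg_trans _ r2); apply: near_eq_cvg; near=> x.
  have [x0 [gx g2x]] : 0 < x /\ 0 < g x /\ 0 < g (2 * x) by near: x.
  by rewrite /=; field; rewrite !lt0r_neq0.
- near=> K; have [K0 [gK g2K]] : 0 < K /\ 0 < g K /\ 0 < g (2 * K) by near: K.
  exists (g (2 * K) / K) => x /andP[Kx x2K].
  have x0 : 0 < x := lt_le_trans K0 Kx.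
  apply: ler_pM; [exact: ltW (lt_le_trans gK (g_nd Kx))|by rewrite invr_ge0 ltW| |].
    exact: g_nd.
  by rewrite lef_pV2 ?posrE.
Unshelve. all: by end_near. Qed.

Lemma ratio_shift1 : g (x + 1) / g x @[x --> +oo] --> (1 : R).
Proof.
apply/cvgrPdist_lt => e e0; have [lam lam1 lame] := exists_gt1_powR_lt a e0.
near=> x; have gx : 0 < g x by near: x.
have x1 : x + 1 <= lam * x.
  have : 1 / (lam - 1) < x by near: x; apply: nbhs_pinfty_gt; exact: num_real.
  by rewrite ltr_pdivrMr ?subr_gt0 //; lra.
have lam_e : g (lam * x) / g x < 1 + e.
  by near: x; apply: (cvgr_lt _ (g_ratio (lt_trans ltr01 lam1))).
have lo : 1 <= g (x + 1) / g x by rewrite ler_pdivlMr // mul1r g_nd // lerDl.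
have hi : g (x + 1) / g x <= g (lam * x) / g x by rewrite ler_pM2r ?invr_gt0 // g_nd.
by rewrite distrC ger0_norm ?subr_ge0 //; lra.
Unshelve. all: by end_near. Qed.

Lemma id_add_ratio lam : 0 < lam ->
  (lam * x + g (lam * x)) / (x + g x) @[x --> +oo] --> lam `^ Num.max a 1.
Proof.
move=> lam0; pose s x := x / (x + g x).
suff comb : s x * lam + (1 - s x) * (g (lam * x) / g x) @[x --> +oo] --> lam `^ Num.max a 1.
  apply: (cvg_trans _ comb); apply: near_eq_cvg; near=> x.
  have [x0 [gx _]] : 0 < x /\ 0 < g x /\ 0 < g (2 * x) by near: x.
  by rewrite /s /=; field; rewrite !lt0r_neq0 ?addr_gt0.
have [a1|a1|a1] := ltgtP a 1.
- have s1 : s x @[x --> +oo] --> (1 : R).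
    have one_plus : 1 + g x / x @[x --> +oo] --> (1 : R).
      by rewrite -[X in _ --> X]addr0; apply: cvgD; [exact: cvg_cst|exact: div_id_cvg0].
    rewrite -invr1; apply: (cvg_trans _ (cvgV (oner_neq0 R) one_plus)).
    apply: near_eq_cvg; near=> x; have [x0 [gx _]] : 0 < x /\ 0 < g x /\ 0 < g (2 * x) by near: x.
    by rewrite /s /=; field; rewrite !lt0r_neq0 ?addr_gt0.
  rewrite powRr1 ?ltW //.
  rewrite -[X in _ --> X](_ : 1 * lam + (1 - 1) * lam `^ a = lam); last first.
    by rewrite mul1r subrr mul0r addr0.
  apply: cvgD; first by apply: cvgM; [exact: s1|exact: cvg_cst].
  by apply: cvgM; [apply: cvgB; [exact: cvg_cst|exact: s1]|exact: g_ratio].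
- have s0 : s x @[x --> +oo] --> (0 : R).
    have u0 := id_div_cvg0 a1.
    have u1 : x / g x + 1 @[x --> +oo] --> (1 : R).
      by rewrite -[X in _ --> X]add0r; apply: cvgD; [exact: u0|exact: cvg_cst].
    rewrite -(mul0r 1^-1); apply: (cvg_trans _ (cvgM u0 (cvgV (oner_neq0 R) u1))).
    apply: near_eq_cvg; near=> x; have [x0 [gx _]] : 0 < x /\ 0 < g x /\ 0 < g (2 * x) by near: x.
    by rewrite /s /=; field; rewrite !lt0r_neq0 ?addr_gt0.
  rewrite -[X in _ --> X](_ : 0 * lam + (1 - 0) * lam `^ a = lam `^ a); last first.
    by rewrite mul0r add0r subr0 mul1r.
  apply: cvgD; first by apply: cvgM; [exact: s0|exact: cvg_cst].
  by apply: cvgM; [apply: cvgB; [exact: cvg_cst|exact: s0]|exact: g_ratio].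
- rewrite a1 powRr1 ?ltW //; apply: cvg_convex_comb; [|exact: cvg_cst|].
    near=> x; have [x0 [gx _]] : 0 < x /\ 0 < g x /\ 0 < g (2 * x) by near: x.
    have xg0 : 0 < x + g x by rewrite addr_gt0.
    by rewrite /s divr_ge0 ?(ltW x0) ?(ltW xg0) //= ler_pdivrMr // mul1r lerDl ltW.
  by have := g_ratio lam0; rewrite a1 powRr1 // ltW.
Unshelve. all: by end_near. Qed.

Lemma regularly_varying_id_add : regularly_varying (fun x => x + g x).
Proof.
split; first by apply: nondecreasing_measurable => // x y xy; exact: lerD xy (g_nd xy).
split; last by exists (Num.max a 1); exact: id_add_ratio.
near=> x; have [x0 [gx _]] : 0 < x /\ 0 < g x /\ 0 < g (2 * x) by near: x.
exact: addr_gt0.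
Unshelve. all: by end_near. Qed.

Lemma asym_equiv_sandwich (q : R -> R) (c : R) : 0 <= c ->
  (forall k, k + g k <= q k) -> (forall k, q k <= k + c + g (k + 1)) ->
  asym_equiv q (fun k => k + g k).
Proof.
move=> c0 q_lo q_up.
have inv0 : k^-1 @[k --> +oo] --> (0 : R).
  exact: (gtr0_cvgV0 (f := id) (nbhs_pinfty_gt (num_real 0))).2 cvg_id.
pose h k := 1 + c / k + (g (k + 1) / g k - 1).
apply: (squeeze_cvgr (f := fun=> 1) (h := h)); last 2 first.
- exact: cvg_cst.
- rewrite -[X in _ --> X](_ : 1 + c * 0 + (1 - 1) = 1); last by rewrite mulr0 subrr !addr0.
  apply: cvgD; first by apply: cvgD; [exact: cvg_cst|apply: cvgM; [exact: cvg_cst|exact: inv0]].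
  by apply: cvgB; [exact: ratio_shift1|exact: cvg_cst].
near=> k; have [k0 [gk _]] : 0 < k /\ 0 < g k /\ 0 < g (2 * k) by near: k.
have A0 : 0 < k + g k by rewrite addr_gt0.
rewrite ler_pdivlMr // mul1r q_lo /= ler_pdivrMr //; apply: le_trans (q_up k) _.
have ck : c / k * k = c by rewrite divfK ?lt0r_neq0.
have gk1 : (g (k + 1) / g k - 1 + 1) * g k = g (k + 1) by rewrite subrK divfK ?lt0r_neq0.
have w0 : 0 <= g (k + 1) / g k - 1 by rewrite subr_ge0 ler_pdivlMr // mul1r g_nd // lerDl.
have u0 : 0 <= c / k by rewrite divr_ge0 // ltW.
rewrite /h; move: ck gk1 w0 u0; set u := c / k; set w := g (k + 1) / g k - 1.
(* The right-hand side exceeds the left-hand one by [u * g k + w * k]. *)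
clearbody u w => <- <- w0 u0; nra.
Unshelve. all: by end_near. Qed.

End NondecreasingRegularVariation.

End RealAsymptotics.

Section CdfTail.
Context d (T : measurableType d) (R : realType) (P : probability T R) (X : {RV P >-> R}).
Local Notation mu := (distribution P X).

Lemma cdfR_EFin x : (cdfR X x)%:E = cdf X x.
Proof. by rewrite /cdfR fineK // fin_num_measure. Qed.

Lemma cdfR_nd : {homo cdfR X : x y / x <= y}.
Proof. by move=> x y xy; rewrite -lee_fin !cdfR_EFin cdf_nondecreasing. Qed.

Lemma cdfR_gt0 : (\forall k \near +oo, 0 < - ln (cdfR X (- k))) -> forall x, 0 < cdfR X x.
Proof.
move=> [M [_ lnM]] x; pose k := Num.max M (- x) + 1.
have Mk : M < k by rewrite ltr_pwDr // le_max lexx.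
have xk : - k <= x by rewrite lerNl ler_wpDr // le_max lexx orbT.
(* [ln] vanishes on nonpositive reals, so [F (- k) <= 0] would give [- ln (F (- k)) = 0]. *)
have Fk : 0 < cdfR X (- k).
  by rewrite ltNge; apply/negP => /ln0 F0; move: (lnM k Mk); rewrite F0 oppr0 ltxx.
exact: lt_le_trans Fk (cdfR_nd xk).
Qed.

Let integrand_measurable k (D : set R) : measurable_fun D (fun x => (expR (- k) - expR x)%:E).
Proof.
apply/measurable_EFinP; apply: measurable_funB; first exact: measurable_cst.
exact: (measurable_funTS (@measurable_expR R)).
Qed.

Let tail k := (\int[mu]_(x in `]-oo, (- k)%R]) (expR (- k) - expR x)%:E)%E.

Let tail_subset k l : k <= l ->
  (\int[mu]_(x in `]-oo, (- l)%R]) (expR (- k) - expR x)%:E <= tail k)%E.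
Proof.
move=> kl; apply: ge0_subset_integral; [exact: measurable_itv|exact: measurable_itv|by []| |].
  by move=> x; rewrite /= in_itv /= => xk; rewrite lee_fin subr_ge0 ler_expR.
by move=> x; rewrite /= !in_itv /= => xl; rewrite (le_trans xl) // lerN2.
Qed.

Let tail_le_cdf k : (tail k <= (expR (- k) * cdfR X (- k))%:E)%E.
Proof.
apply: le_trans (_ : _ <= \int[mu]_(x in `]-oo, (- k)%R]) cst (expR (- k))%:E x)%E _.
  apply: ge0_le_integral; [exact: measurable_itv| |by []|exact: measurable_cst|].
    by move=> x; rewrite /= in_itv /= => xk; rewrite lee_fin subr_ge0 ler_expR.
  by move=> x _; rewrite lee_fin lerBlDr lerDl ltW // expR_gt0.
by rewrite integral_cst ?EFinM ?cdfR_EFin //; exact: measurable_itv.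
Qed.

Let pfunE k : (pfun X k)%:E = tail k.
Proof.
rewrite /pfun fineK // ge0_fin_numE ?(le_lt_trans (tail_le_cdf k)) ?ltry //.
by apply: integral_ge0 => x; rewrite /= in_itv /= => xk; rewrite lee_fin subr_ge0 ler_expR.
Qed.

Lemma pfun_le_cdf k : pfun X k <= expR (- k) * cdfR X (- k).
Proof. by rewrite -lee_fin pfunE. Qed.

Lemma cdf_le_pfun k : (expR (- k) - expR (- (k + 1))) * cdfR X (- (k + 1)) <= pfun X k.
Proof.
have k1 : k <= k + 1 by lra.
rewrite -lee_fin pfunE; apply: (le_trans _ (tail_subset k1)).
rewrite EFinM cdfR_EFin -integral_cst; last exact: measurable_itv.
apply: ge0_le_integral; [exact: measurable_itv| |exact: measurable_cst|by []|].
  by move=> x _; rewrite lee_fin subr_ge0 ler_expR lerN2 lerDl.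
by move=> x; rewrite /= in_itv /= => xk; rewrite lee_fin lerB // ler_expR.
Qed.

Lemma pfun_nonincreasing k l : k <= l -> pfun X l <= pfun X k.
Proof.
move=> kl; rewrite -lee_fin !pfunE; apply: (le_trans _ (tail_subset kl)).
apply: ge0_le_integral; [exact: measurable_itv| |by []|by []|].
  by move=> x; rewrite /= in_itv /= => xl; rewrite lee_fin subr_ge0 ler_expR.
by move=> x _; rewrite lee_fin lerB // ler_expR lerN2.
Qed.

Section PositiveCdf.
Hypothesis F_gt0 : forall x, 0 < cdfR X x.

Lemma pfun_gt0 k : 0 < pfun X k.
Proof.
apply: lt_le_trans (cdf_le_pfun k); rewrite mulr_gt0 // subr_gt0 ltr_expR; lra.
Qed.

Lemma neg_ln_pfun_ge k : k - ln (cdfR X (- k)) <= - ln (pfun X k).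
Proof.
have : ln (pfun X k) <= ln (expR (- k) * cdfR X (- k)).
  by rewrite ler_ln ?posrE ?mulr_gt0 ?expR_gt0 ?pfun_gt0 // pfun_le_cdf.
rewrite lnM ?posrE ?expR_gt0 // expRK; lra.
Qed.

Lemma neg_ln_pfun_le k :
  - ln (pfun X k) <= k + - ln (1 - expR (-1)) + - ln (cdfR X (- (k + 1))).
Proof.
have e1 : 0 < 1 - expR (-1) :> R by rewrite subr_gt0 -[X in _ < X]expR0 ltr_expR; lra.
have : ln (expR (- k) * (1 - expR (-1)) * cdfR X (- (k + 1))) <= ln (pfun X k).
  rewrite ler_ln ?posrE ?mulr_gt0 ?expR_gt0 ?pfun_gt0 //.
  by rewrite mulrBr mulr1 -expRD -opprD; exact: cdf_le_pfun.
rewrite !lnM ?posrE ?mulr_gt0 ?expR_gt0 // expRK; lra.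
Qed.

Lemma neg_ln_pfun_nd : {homo (fun k => - ln (pfun X k)) : k l / k <= l}.
Proof.
by move=> k l kl; rewrite lerN2 ler_ln ?posrE ?pfun_gt0 // pfun_nonincreasing.
Qed.

End PositiveCdf.

End CdfTail.

Theorem lemma5 (d : measure_display) (T : measurableType d) (R : realType)
  (P : probability T R) (X : {RV P >-> R}) :
  (exists2 eps : R, 0 < eps &
     (\int[P]_w (expR (- eps * X w))%:E < +oo)%E) ->
  regularly_varying (fun k : R => - ln (cdfR X (- k))) ->
  regularly_varying (fun k : R => - ln (pfun X k)) /\
  asym_equiv (fun k : R => - ln (pfun X k))
             (fun k : R => k - ln (cdfR X (- k))).
Proof.
move=> _ [_ [g_gt0 [a g_ratio]]].
have F_gt0 := cdfR_gt0 g_gt0.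
have g_nd : {homo (fun k => - ln (cdfR X (- k))) : k l / k <= l}.
  by move=> k l kl; rewrite lerN2 ler_ln ?posrE // cdfR_nd // lerN2.
have c_ge0 : 0 <= - ln (1 - expR (-1)) :> R.
  by rewrite oppr_ge0 ln_le0 // lerBlDr lerDl ltW // expR_gt0.
have q_equiv := asym_equiv_sandwich g_nd g_gt0 g_ratio c_ge0
  (neg_ln_pfun_ge F_gt0) (neg_ln_pfun_le F_gt0).
split => //; apply: regularly_varying_asym_equiv q_equiv _.
  exact: nondecreasing_measurable (neg_ln_pfun_nd F_gt0).
exact: regularly_varying_id_add g_nd g_gt0 g_ratio.
Qed.
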